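(* Suppose that $\Re s=1$, $u\ge1$, and $|s|>u$. For integers $\nu\ge1$, \[ \left|\frac{\partial^{\nu}}{\partial u^{\nu}}G(u,s)\right|\ll_{\nu}\frac{|s|^{\nu-1}}{u^{2\nu-1}}, \] with implied constant depending only on $\nu$.
   Context: $G(u,s):=\int_{0}^{1/u}\frac{1-e^{-ts}}{t}\,dt$. *)

From Stdlib Require Import Reals.
From Coquelicot Require Import Coquelicot.
Open Scope R_scope.

(* G(u,s) = \int_0^{1/u} (1 - e^{-ts})/t dt for complex s = a + i b, split into
   real and imaginary parts using e^{-ts} = e^{-ta}(cos(tb) - i sin(tb)):
   1 - e^{-ts} = (1 - e^{-ta} cos(tb)) + i e^{-ta} sin(tb). *)
Definition G_re (u : R) (s : C) : R :=
  RInt (fun t => (1 - exp (- (t * Re s)) * cos (t * Im s)) / t) 0 (1 / u).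

Definition G_im (u : R) (s : C) : R :=
  RInt (fun t => exp (- (t * Re s)) * sin (t * Im s) / t) 0 (1 / u).

Definition G (u : R) (s : C) : C := (G_re u s, G_im u s).

Definition dG (nu : nat) (u : R) (s : C) : C :=
  (Derive_n (fun v => G_re v s) nu u, Derive_n (fun v => G_im v s) nu u).

(** The integrand of [G] is [(1 - e^(-ts))/t], so [dG/du = -(1 - e^(-s/u))/u].
    Writing [s = a + ib], the real and imaginary parts of this derivative are
    finite sums of "waves" [c u^(-j) e^(-a/u) sin(p + b/u)], a class closed
    under [d/du]: a wave of degree [j] differentiates into three waves of
    degrees [j+1], [j+2], [j+2], the two new coefficients picking up a factor
    [a] or [b], both at most [|s|]. Hence the [(nu-1)]-th derivative of [dG/du]
    consists of waves of degree at most [2nu-1], and, for [0 < u <= |s|], a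
    wave of degree [j] is bounded by [|c| |s|^(2nu-1-j) / u^(2nu-1)]; weighting
    each coefficient by this power of [|s|] turns the whole computation into a
    recursion on a single number, which grows by a factor [(2k+3)|s|] per
    derivative. *)
From Stdlib Require Import Reals Lra Lia List.
From Coquelicot Require Import Coquelicot.
Open Scope R_scope.

Section QuotientIntegral.

Variable phi : R -> R.
Hypothesis phi_cont : forall t, continuous phi t.
Hypothesis phi_derivable0 : ex_derive phi 0.
Hypothesis phi0 : phi 0 = 0.

(* [phi t / t] with its removable singularity at [0] filled in; in Rocq,
   [phi 0 / 0] is the junk value [0]. *)
Definition quotient_ext (t : R) : R :=
  if Req_EM_T t 0 then Derive phi 0 else phi t / t.

Lemma continuous_quotient_ext t : continuous quotient_ext t.
Proof.
destruct (Req_EM_T t 0) as [-> | Ht].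
- apply continuity_pt_filterlim.
  assert (Hl : derivable_pt_lim phi 0 (Derive phi 0))
    by (apply is_derive_Reals, Derive_correct, phi_derivable0).
  intros eps Heps. destruct (Hl eps Heps) as [d Hd].
  exists d. split; [apply cond_pos |].
  intros x [[_ Hx0] Hx]. unfold quotient_ext in *. simpl in *.
  destruct (Req_EM_T x 0) as [e | _]; [now exfalso; auto |].
  destruct (Req_EM_T 0 0) as [_ | n]; [| now exfalso; auto].
  unfold Rdist in *. rewrite Rminus_0_r in Hx.
  specialize (Hd x (not_eq_sym Hx0) Hx).
  now rewrite Rplus_0_l, phi0, Rminus_0_r in Hd.
- apply continuous_ext_loc with (fun y => phi y * / y).
  + apply (locally_open (fun y => y <> 0)); [apply open_neq | | exact Ht].
    intros y Hy. unfold quotient_ext.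
    destruct (Req_EM_T y 0); [contradiction | reflexivity].
  + apply (@continuous_mult R_UniformSpace R_AbsRing);
      [apply phi_cont | apply continuous_Rinv, Ht].
Qed.

Lemma RInt_quotient_ext w :
  RInt (fun t => phi t / t) 0 w = RInt quotient_ext 0 w.
Proof.
apply RInt_ext. intros x Hx. unfold quotient_ext.
destruct (Req_EM_T x 0) as [-> | _]; [| reflexivity].
exfalso. unfold Rmin, Rmax in Hx. destruct (Rle_dec 0 w); lra.
Qed.

Lemma Derive_RInt_quotient_inv v : v <> 0 ->
  Derive (fun v => RInt (fun t => phi t / t) 0 (1 / v)) v = - (phi (1 / v) / v).
Proof.
intros Hv.
rewrite (Derive_ext _ (fun v => RInt quotient_ext 0 (1 / v)))
  by (intros; apply RInt_quotient_ext).
apply is_derive_unique.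
assert (Hinv : is_derive (fun v => 1 / v) v (- (1 / (v * v))))
  by (auto_derive; [exact Hv | field; exact Hv]).
assert (HF : is_derive (RInt quotient_ext 0) (1 / v) (quotient_ext (1 / v))).
{ apply (is_derive_RInt _ _ 0); [| apply continuous_quotient_ext].
  exists (mkposreal 1 Rlt_0_1). intros y _. apply RInt_correct.
  apply ex_RInt_continuous. intros; apply continuous_quotient_ext. }
replace (- (phi (1 / v) / v)) with (scal (- (1 / (v * v))) (quotient_ext (1 / v))).
{ exact (is_derive_comp _ _ _ _ _ HF Hinv). }
unfold quotient_ext, scal. simpl. unfold mult. simpl.
destruct (Req_EM_T (1 / v) 0) as [e | _].
- exfalso. unfold Rdiv in e. rewrite Rmult_1_l in e. now apply (Rinv_neq_0_compat v).
- field. exact Hv.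
Qed.

End QuotientIntegral.

Record wave := Wave { amp : R; deg : nat; damp : R; freq : R; phase : R }.

Definition wave_eval (w : wave) (v : R) : R :=
  amp w * (/ v) ^ deg w * exp (- (damp w / v)) * sin (phase w + freq w / v).

Definition waves_eval (L : list wave) (v : R) : R :=
  fold_right (fun w acc => wave_eval w v + acc) 0 L.

Definition wave_deriv (w : wave) : list wave :=
  let (c, j, a, b, p) := w in
  Wave (- (INR j * c)) (S j) a b p
  :: Wave (c * a) (S (S j)) a b p
  :: Wave (- (c * b)) (S (S j)) a b (PI / 2 + p) :: nil.

Definition waves_deriv (L : list wave) : list wave := flat_map wave_deriv L.

Lemma waves_eval_app L1 L2 v :
  waves_eval (L1 ++ L2) v = waves_eval L1 v + waves_eval L2 v.
Proof.
induction L1 as [| w L1 IH]; simpl; [ring | unfold waves_eval in *; rewrite IH; ring].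
Qed.

Lemma is_derive_wave_eval w v : v <> 0 ->
  is_derive (wave_eval w) v (waves_eval (wave_deriv w) v).
Proof.
intros Hv. destruct w as [c j a b p]. unfold wave_eval, waves_eval. simpl.
auto_derive; [tauto |].
unfold wave_eval. simpl. rewrite Rplus_assoc, <- cos_sin. unfold Rdiv.
destruct j as [| j]; [simpl; field; exact Hv |].
rewrite S_INR. simpl pred. simpl. field. exact Hv.
Qed.

Lemma is_derive_waves_eval L v : v <> 0 ->
  is_derive (waves_eval L) v (waves_eval (waves_deriv L) v).
Proof.
intros Hv. induction L as [| w L IH].
- unfold waves_eval. simpl. auto_derive; auto.
- simpl waves_deriv. rewrite waves_eval_app.
  apply (is_derive_plus (wave_eval w) (waves_eval L));
    [apply is_derive_wave_eval, Hv | exact IH].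
Qed.

Lemma Derive_n_waves_eval m L v : 0 < v ->
  Derive_n (waves_eval L) m v = waves_eval (Nat.iter m waves_deriv L) v.
Proof.
revert v. induction m as [| m IH]; intros v Hv; [reflexivity |]. simpl.
rewrite (Derive_ext_loc _ (waves_eval (Nat.iter m waves_deriv L))).
- apply is_derive_unique, is_derive_waves_eval. lra.
- apply (locally_open (fun y => 0 < y)); [apply open_gt | exact IH | exact Hv].
Qed.

Lemma Derive_n_S_of_waves (f : R -> R) L m u :
  (forall v, 0 < v -> Derive f v = waves_eval L v) -> 0 < u ->
  Derive_n f (S m) u = waves_eval (Nat.iter m waves_deriv L) u.
Proof.
intros Hf Hu.
replace (S m) with (m + 1)%nat by lia.
rewrite <- Derive_n_comp.
rewrite (Derive_n_ext_loc _ (waves_eval L)).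
- now apply Derive_n_waves_eval.
- apply (locally_open (fun y => 0 < y)); [apply open_gt | exact Hf | exact Hu].
Qed.

Section WaveBounds.

Variable M : R.
Hypothesis M_ge0 : 0 <= M.

Definition wave_ok (n : nat) (w : wave) : Prop :=
  0 <= damp w <= M /\ Rabs (freq w) <= M /\ (deg w <= n)%nat.

Definition waves_weight (n : nat) (L : list wave) : R :=
  fold_right (fun w acc => Rabs (amp w) * M ^ (n - deg w) + acc) 0 L.

Lemma waves_weight_app n L1 L2 :
  waves_weight n (L1 ++ L2) = waves_weight n L1 + waves_weight n L2.
Proof.
induction L1 as [| w L1 IH]; simpl; [ring | unfold waves_weight in *; rewrite IH; ring].
Qed.

Lemma wave_ok_deriv n L :
  List.Forall (wave_ok n) L -> List.Forall (wave_ok (S (S n))) (waves_deriv L).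
Proof.
intros H. induction H as [| [c j a b p] L [Ha [Hb Hj]] _ IH]; [constructor |].
unfold waves_deriv in *. cbn [flat_map]. apply Forall_app; split; [| exact IH].
unfold wave_ok in *. simpl in *.
repeat apply Forall_cons; try apply Forall_nil; simpl; repeat split; try lra; lia.
Qed.

Lemma waves_weight_deriv n L : List.Forall (wave_ok n) L ->
  waves_weight (S (S n)) (waves_deriv L) <= (INR n + 2) * M * waves_weight n L.
Proof.
intros H. induction H as [| [c j a b p] L [Ha [Hb Hj]] _ IH].
{ simpl. lra. }
unfold waves_deriv. cbn [flat_map]. rewrite waves_weight_app. fold (waves_deriv L).
cbn [waves_weight fold_right wave_deriv amp deg damp freq] in *. fold (waves_weight n L).
replace (S (S n) - S j)%nat with (S (n - j)) by lia.
replace (S (S n) - S (S j))%nat with (n - j)%nat by lia.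
rewrite Rmult_plus_distr_l.
apply Rplus_le_compat; [| exact IH].
rewrite !Rabs_Ropp, !Rabs_mult, (Rabs_pos_eq (INR j)), (Rabs_pos_eq a)
  by (apply pos_INR || lra).
(* With [X] the parent's contribution, the three children contribute
   [j M X], [|a| X] and [|b| X]. *)
set (X := Rabs c * M ^ (n - j)).
assert (HX : 0 <= X) by (apply Rmult_le_pos; [apply Rabs_pos | apply pow_le, M_ge0]).
assert (Hjn : INR j <= INR n) by (apply le_INR; exact Hj).
simpl pow.
assert (Hb' : Rabs b * X <= M * X) by (apply Rmult_le_compat_r; assumption).
assert (Ha' : a * X <= M * X) by (apply Rmult_le_compat_r; lra).
assert (Hj' : INR j * X <= INR n * X) by (apply Rmult_le_compat_r; assumption).
unfold X in *. nra.
Qed.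

Lemma Rabs_wave_eval_le n w v : wave_ok n w -> 0 < v <= M ->
  Rabs (wave_eval w v) <= Rabs (amp w) * M ^ (n - deg w) / v ^ n.
Proof.
destruct w as [c j a b p]. unfold wave_ok, wave_eval. simpl.
intros [Ha [_ Hj]] Hv.
assert (Hexp : exp (- (a / v)) <= 1).
{ rewrite <- exp_0.
  destruct (Rle_lt_or_eq_dec 0 (a / v)) as [Hpos | Hzero];
    [apply Rdiv_le_0_compat; lra | left; apply exp_increasing; lra |].
  rewrite <- Hzero, Ropp_0. lra. }
assert (Hsin : Rabs (sin (p + b / v)) <= 1)
  by (apply Rabs_le; pose proof (SIN_bound (p + b / v)); lra).
assert (Hinv : 0 <= (/ v) ^ j) by (apply pow_le; left; apply Rinv_0_lt_compat; lra).
assert (Hwave : Rabs (c * (/ v) ^ j * exp (- (a / v)) * sin (p + b / v))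
                <= Rabs c * (/ v) ^ j * 1 * 1).
{ rewrite !Rabs_mult, (Rabs_pos_eq ((/ v) ^ j)), (Rabs_pos_eq (exp _))
    by (assumption || (left; apply exp_pos)).
  pose proof (Rabs_pos c). pose proof (exp_pos (- (a / v))).
  apply Rmult_le_compat;
    [apply Rmult_le_pos; [apply Rmult_le_pos |]; lra | apply Rabs_pos | | exact Hsin].
  apply Rmult_le_compat_l; [apply Rmult_le_pos |]; lra. }
assert (Hpow : (/ v) ^ j = v ^ (n - j) / v ^ n).
{ rewrite <- (Nat.sub_add j n Hj) at 2. rewrite pow_add, pow_inv.
  field. split; apply pow_nonzero; lra. }
assert (HvM : v ^ (n - j) <= M ^ (n - j)) by (apply pow_incr; lra).
assert (Hvn : 0 < / v ^ n) by (apply Rinv_0_lt_compat, pow_lt; lra).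
eapply Rle_trans; [exact Hwave |].
rewrite !Rmult_1_r, Hpow. unfold Rdiv. rewrite !Rmult_assoc.
apply Rmult_le_compat_l; [apply Rabs_pos |].
apply Rmult_le_compat_r; lra.
Qed.

Lemma Rabs_waves_eval_le n L v : List.Forall (wave_ok n) L -> 0 < v <= M ->
  Rabs (waves_eval L v) <= waves_weight n L / v ^ n.
Proof.
intros H Hv. induction H as [| w L Hw _ IH].
- unfold waves_eval, waves_weight. simpl. rewrite Rabs_R0, Rdiv_0_l. lra.
- cbn [waves_eval waves_weight fold_right].
  fold (waves_eval L v) (waves_weight n L).
  eapply Rle_trans; [apply Rabs_triang |].
  rewrite Rdiv_plus_distr.
  apply Rplus_le_compat; [apply Rabs_wave_eval_le |]; assumption.
Qed.

Fixpoint deriv_const (m : nat) : R :=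
  match m with
  | O => 1
  | S k => (INR (2 * k + 1) + 2) * deriv_const k
  end.

Lemma deriv_const_pos m : 0 < deriv_const m.
Proof.
induction m as [| m IH]; cbn [deriv_const]; [lra |].
apply Rmult_lt_0_compat; [pose proof (pos_INR (2 * m + 1)); lra | exact IH].
Qed.

Lemma waves_iter_deriv_ok_weight L m : List.Forall (wave_ok 1) L ->
  List.Forall (wave_ok (2 * m + 1)) (Nat.iter m waves_deriv L) /\
  waves_weight (2 * m + 1) (Nat.iter m waves_deriv L)
    <= deriv_const m * waves_weight 1 L * M ^ m.
Proof.
intros HL. induction m as [| m [IHok IHw]].
{ simpl. split; [exact HL | lra]. }
rewrite Nat.iter_succ.
replace (2 * S m + 1)%nat with (S (S (2 * m + 1))) by lia.
split; [now apply wave_ok_deriv |].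
eapply Rle_trans; [now apply waves_weight_deriv |].
cbn [deriv_const]. simpl pow.
pose proof (pos_INR (2 * m + 1)).
replace ((INR (2 * m + 1) + 2) * deriv_const m * waves_weight 1 L * (M * M ^ m))
  with ((INR (2 * m + 1) + 2) * M * (deriv_const m * waves_weight 1 L * M ^ m)) by ring.
apply Rmult_le_compat_l; [apply Rmult_le_pos; lra | exact IHw].
Qed.

Lemma Rabs_Derive_n_S_le (f : R -> R) L m u :
  (forall v, 0 < v -> Derive f v = waves_eval L v) ->
  List.Forall (wave_ok 1) L -> 0 < u <= M ->
  Rabs (Derive_n f (S m) u)
    <= deriv_const m * waves_weight 1 L * M ^ m / u ^ (2 * m + 1).
Proof.
intros Hf HL Hu.
rewrite (Derive_n_S_of_waves f L) by (assumption || lra).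
destruct (waves_iter_deriv_ok_weight L m HL) as [Hok Hw].
eapply Rle_trans; [apply Rabs_waves_eval_le; [exact Hok | exact Hu] |].
unfold Rdiv. apply Rmult_le_compat_r; [left; apply Rinv_0_lt_compat, pow_lt; lra |].
lra.
Qed.

End WaveBounds.

Definition G_re_waves (s : C) : list wave :=
  Wave (-1) 1 0 0 (PI / 2) :: Wave 1 1 (Re s) (Im s) (PI / 2) :: nil.

Definition G_im_waves (s : C) : list wave :=
  Wave (-1) 1 (Re s) (Im s) 0 :: nil.

Lemma waves_weight_G_re M s : waves_weight M 1 (G_re_waves s) = 2.
Proof. simpl. rewrite (Rabs_left (-1)), Rabs_R1 by lra. ring. Qed.

Lemma waves_weight_G_im M s : waves_weight M 1 (G_im_waves s) = 1.
Proof. simpl. rewrite (Rabs_left (-1)) by lra. ring. Qed.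

Lemma Derive_G_re s v : 0 < v ->
  Derive (fun v => G_re v s) v = waves_eval (G_re_waves s) v.
Proof.
intros Hv. unfold G_re.
rewrite (Derive_RInt_quotient_inv (fun t => 1 - exp (- (t * Re s)) * cos (t * Im s))).
- unfold waves_eval, wave_eval. simpl. rewrite <- !cos_sin.
  replace (1 / v * Re s) with (Re s / v) by (field; lra).
  replace (1 / v * Im s) with (Im s / v) by (field; lra).
  rewrite Rdiv_0_l, Ropp_0, exp_0, cos_0. field. lra.
- intros t. apply (ex_derive_continuous (K := R_AbsRing) (V := R_NormedModule)).
  auto_derive. auto.
- auto_derive. auto.
- rewrite !Rmult_0_l, Ropp_0, exp_0, cos_0. ring.
- lra.
Qed.

Lemma Derive_G_im s v : 0 < v ->
  Derive (fun v => G_im v s) v = waves_eval (G_im_waves s) v.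
Proof.
intros Hv. unfold G_im.
rewrite (Derive_RInt_quotient_inv (fun t => exp (- (t * Re s)) * sin (t * Im s))).
- unfold waves_eval, wave_eval. simpl.
  replace (1 / v * Re s) with (Re s / v) by (field; lra).
  replace (1 / v * Im s) with (0 + Im s / v) by (field; lra).
  field. lra.
- intros t. apply (ex_derive_continuous (K := R_AbsRing) (V := R_NormedModule)).
  auto_derive. auto.
- auto_derive. auto.
- rewrite !Rmult_0_l, sin_0. ring.
- lra.
Qed.

Lemma Cmod_le_2_max (z : C) B :
  Rabs (fst z) <= B -> Rabs (snd z) <= B -> Cmod z <= 2 * B.
Proof.
intros Hx Hy.
assert (Hmax : Rmax (Rabs (fst z)) (Rabs (snd z)) <= B) by (apply Rmax_lub; assumption).
assert (Hsqrt2 : sqrt 2 <= 2).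
{ rewrite <- (sqrt_square 2) at 2 by lra. apply sqrt_le_1_alt. lra. }
pose proof (sqrt_pos 2). pose proof (Rle_trans _ _ _ (Rabs_pos _) Hx).
eapply Rle_trans; [apply Cmod_2Rmax |].
apply Rle_trans with (sqrt 2 * B); [apply Rmult_le_compat_l |]; nra.
Qed.

Lemma Cmod_dG_le s m u : 0 <= Re s -> 0 < u <= Cmod s ->
  Cmod (dG (S m) u s) <= 4 * deriv_const m * Cmod s ^ m / u ^ (2 * m + 1).
Proof.
intros Hre Hu. set (M := Cmod s).
assert (HM : 0 <= M) by (unfold M; lra).
assert (Hs : 0 <= Re s <= M /\ Rabs (Im s) <= M).
{ split; [split; [exact Hre | eapply Rle_trans; [apply Rle_abs | apply re_le_Cmod]] |].
  eapply Rle_trans; [apply Rmax_r | apply (Rmax_Cmod s)]. }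
destruct Hs as [Ha Hb].
assert (Hre_ok : List.Forall (wave_ok M 1) (G_re_waves s)).
{ repeat apply Forall_cons; try apply Forall_nil; unfold wave_ok; simpl;
    rewrite ?Rabs_R0; repeat split; lra || lia. }
assert (Him_ok : List.Forall (wave_ok M 1) (G_im_waves s)).
{ repeat apply Forall_cons; try apply Forall_nil; unfold wave_ok; simpl;
    repeat split; lra || lia. }
pose proof (deriv_const_pos m) as Hc.
replace (4 * deriv_const m * M ^ m / u ^ (2 * m + 1))
  with (2 * (deriv_const m * 2 * M ^ m / u ^ (2 * m + 1))) by (unfold Rdiv; ring).
apply Cmod_le_2_max; cbn [fst snd].
- rewrite <- (waves_weight_G_re M s) at 1.
  apply Rabs_Derive_n_S_le; [exact HM | apply Derive_G_re | exact Hre_ok | exact Hu].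
- eapply Rle_trans.
  + apply (Rabs_Derive_n_S_le M HM _ (G_im_waves s));
      [apply Derive_G_im | exact Him_ok | exact Hu].
  + rewrite waves_weight_G_im. unfold Rdiv.
    rewrite !(Rmult_comm (deriv_const m)), !Rmult_assoc.
    apply Rmult_le_compat_r; [| lra].
    apply Rmult_le_pos; [lra |].
    apply Rmult_le_pos; [apply pow_le, HM | left; apply Rinv_0_lt_compat, pow_lt; lra].
Qed.

Theorem lemma8 : forall nu : nat, (1 <= nu)%nat ->
  exists K : R, 0 < K /\
    forall (u : R) (s : C), Re s = 1 -> 1 <= u -> u < Cmod s ->
      Cmod (dG nu u s) <= K * Cmod s ^ (nu - 1) / u ^ (2 * nu - 1).
Proof.
intros [| m] Hnu; [lia |].
exists (4 * deriv_const m). split; [pose proof (deriv_const_pos m); lra |].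
intros u s Hre Hu Hus.
replace (S m - 1)%nat with m by lia.
replace (2 * S m - 1)%nat with (2 * m + 1)%nat by lia.
apply Cmod_dG_le; lra.
Qed.
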